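(* Let $\mathbb{F}$ be a field, $p,q\in\mathbb{F}[t]$ monic of degree $2$, and $\mathcal{W}_{p,q}=\mathbb{F}\langle a,b\rangle/(p(a),q(b))$. Let $\Phi$ be an injective endomorphism of the $\mathbb{F}$-algebra $\mathcal{W}_{p,q}$. Then $\Phi(x^\star)=\Phi(x)^\star$ for all $x\in\mathcal{W}_{p,q}$.
   Context: $\mathcal{W}_{p,q}$ is the free associative unital $\mathbb{F}$-algebra on two generators modulo the ideal generated by $p(a),q(b)$. For a $2$-dimensional algebra set $x^\star=\mathrm{tr}(x)-x$; the adjunction $x\mapsto x^\star$ of $\mathcal{W}_{p,q}$ is the unique $\mathbb{F}$-linear anti-automorphism agreeing with this on $\mathbb{F}[a]$ and $\mathbb{F}[b]$ (so $a^\star=\mathrm{tr}(p)-a$, $b^\star=\mathrm{tr}(q)-b$, with $\mathrm{tr}(p)$ minus the coefficient of $t$ in $p$). *)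

From HB Require Import structures.
From mathcomp Require Import all_boot all_order all_algebra.
Set Implicit Arguments. Unset Strict Implicit. Unset Printing Implicit Defensive.
Import GRing.Theory.
Local Open Scope ring_scope.

Definition trp (F : fieldType) (p : {poly F}) : F := - p`_1.

(* (W, a, b) is the F-algebra presented by generators a, b and relations
   p(a) = 0, q(b) = 0, i.e. W_{p,q} = F<a,b>/(p(a), q(b)), characterized by its
   universal property: for every F-algebra B and u, v in B with p(u) = q(v) = 0
   there is a unique F-algebra morphism W -> B sending a to u and b to v. *)
Definition is_W_presentation (F : fieldType) (p q : {poly F})
    (W : algType F) (a b : W) : Prop :=
  horner_alg a p = 0 /\ horner_alg b q = 0 /\
  forall (B : algType F) (u v : B),
    horner_alg u p = 0 -> horner_alg v q = 0 ->
    (exists f : {lrmorphism W -> B}, f a = u /\ f b = v) /\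
    (forall f g : {lrmorphism W -> B},
        f a = g a -> f b = g b -> forall x, f x = g x).

Definition is_adjunction (F : fieldType) (p q : {poly F})
    (W : algType F) (a b : W) (star : W -> W) : Prop :=
  (forall (c : F) (x y : W), star (c *: x + y) = c *: star x + star y) /\
  star 1 = 1 /\
  (forall x y : W, star (x * y) = star y * star x) /\
  bijective star /\
  star a = (trp p)%:A - a /\
  star b = (trp q)%:A - b.

(* W_{p,q} has a faithful representation pi in 2x2 matrices over F[X] sending
   a to the companion matrix of p and b to a matrix with characteristic
   polynomial q: W is spanned over the polynomials in the central element
   z = ab + ba + tr(q) a + tr(p) b by 1, a, b, ab, whose images are independent
   over F[X]. Under pi the adjunction becomes the adjugate, x^* = tr(x) - x.
   Now U = pi(Phi a) is a root of p, so by Cayley-Hamilton (tr U - tr p) U is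
   scalar: either tr U = tr p, and then Phi(a)^* = tr(p) - Phi(a) = Phi(a^* ),
   or U is scalar, making Phi(a) central, which contradicts ab <> ba and the
   injectivity of Phi. Likewise for b, and both sides of the identity are
   anti-multiplicative in x. *)

From HB Require Import structures.
From mathcomp Require Import all_boot all_order all_algebra.
From mathcomp Require Import boolp ring.
Set Implicit Arguments. Unset Strict Implicit. Unset Printing Implicit Defensive.
Import GRing.Theory.
Local Open Scope ring_scope.

Lemma lrmorph_horner_alg (R : nzRingType) (A B : algType R)
    (g : {lrmorphism A -> B}) (x : A) (p : {poly R}) :
  g (horner_alg x p) = horner_alg (g x) p.
Proof.
elim/poly_ind: p => [|p c IHp]; first by rewrite !rmorph0.
by rewrite !rmorphD !rmorphM /= IHp !horner_algC !horner_algX rmorph_alg.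
Qed.

Lemma commr_horner_alg (R : nzRingType) (A : algType R) (x y : A) (e : {poly R}) :
  GRing.comm x y -> GRing.comm x (horner_alg y e).
Proof.
move=> cxy; elim/poly_ind: e => [|e c IHe]; first by rewrite rmorph0; apply: commr0.
rewrite rmorphD rmorphM /= horner_algX horner_algC.
by apply: commrD; [apply: commrM | apply/commr_sym/comm_alg].
Qed.

Lemma horner_alg_monic_quadratic (R : nzRingType) (A : algType R)
    (p : {poly R}) (x : A) :
  p \is monic -> size p = 3%N -> horner_alg x p = x * x + p`_1 *: x + (p`_0)%:A.
Proof.
move=> /monicP lead_p sp; have p2 : p`_2 = 1 by rewrite -lead_p lead_coefE sp.
rewrite -[in LHS](coefK p) poly_def sp linear_sum !big_ord_recr big_ord0 /= add0r.
rewrite !linearZ /= !rmorphXn /= horner_algX p2 expr0 expr1 mulr1 !mulr_algl.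
by rewrite scale1r expr2 addrC [_ + p`_1 *: x]addrC addrA.
Qed.

Lemma monic_quadratic_root_sqr (R : nzRingType) (A : algType R)
    (p : {poly R}) (x : A) :
  p \is monic -> size p = 3%N -> horner_alg x p = 0 ->
  x * x = - (p`_1 *: x) - (p`_0)%:A.
Proof.
move=> mp sp; rewrite horner_alg_monic_quadratic // => /eqP.
by rewrite -addrA addr_eq0 opprD => /eqP.
Qed.

Lemma commr_quadratic (R : nzRingType) (A : algType R) (x y : A) (c1 c0 : R) :
  x * x = - (c1 *: x) - c0%:A -> GRing.comm x (x * y + y * x + c1 *: y).
Proof.
move=> x_sqr; rewrite /GRing.comm.
have -> : x * (x * y + y * x + c1 *: y) = x * y * x - c0 *: y.
  rewrite !mulrDr mulrA x_sqr mulrBl mulNr -!scalerAl mul1r -scalerAr mulrA.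
  by rewrite addrC !addrA subrr add0r addrC.
rewrite !mulrDl -[y * x * x]mulrA x_sqr mulrBr mulrN -!scalerAr mulr1 -scalerAl.
by rewrite -addrA (addrAC (- _)) addNr add0r.
Qed.

Section Subalgebra.
Variables (R : pzRingType) (A : algType R) (S : pred A).
Hypothesis algS : GRing.subsemialg_closed S.

Definition subalg_of of GRing.subsemialg_closed S := {x : A | S x}.
HB.instance Definition _ := [isSub of subalg_of algS for @sval A S].
HB.instance Definition _ := [Choice of subalg_of algS by <:].
HB.instance Definition _ :=
  GRing.SubChoice_isSubAlgebra.Build R A S (subalg_of algS) algS.

Definition subalg_val : subalg_of algS -> A := val.
HB.instance Definition _ := GRing.RMorphism.copy subalg_val val.
HB.instance Definition _ := GRing.Linear.copy subalg_val val.
End Subalgebra.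

Section Presentation.
Variables (F : fieldType) (p q : {poly F}) (W : algType F) (a b : W).
Hypothesis pres : is_W_presentation p q a b.

(* The subalgebra of elements satisfying P receives a morphism from W fixing
   a and b; by uniqueness, composing it with the inclusion gives the identity. *)
Lemma W_ind (P : W -> Prop) :
  P 1 -> (forall x y, P x -> P y -> P (x + y)) ->
  (forall c x, P x -> P (c *: x)) -> (forall x y, P x -> P y -> P (x * y)) ->
  P a -> P b -> forall x, P x.
Proof.
move=> P1 PD PZ PM Pa Pb x.
pose S : pred W := fun x => `[< P x >].
have algS : GRing.subsemialg_closed S.
  split; [exact/asboolT | split | |] => [|u v /asboolP Pu /asboolP Pv
    | c u /asboolP Pu | u v /asboolP Pu /asboolP Pv]; apply/asboolT.
  - by rewrite -(scale0r 1); apply: PZ.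
  - exact: PD.
  - exact: PZ.
  - exact: PM.
have [pa [qb univ]] := pres.
have root_sub (y : subalg_of algS) r :
    horner_alg (val y) r = 0 -> horner_alg y r = 0.
  by move=> ry; apply: val_inj; rewrite /= -[val _]/(subalg_val _) lrmorph_horner_alg.
pose a' : subalg_of algS := Sub a (asboolT Pa).
pose b' : subalg_of algS := Sub b (asboolT Pb).
have [[f [fa fb]] _] := univ _ a' b' (root_sub a' p pa) (root_sub b' q qb).
have [_ uniqW] := univ _ a b pa qb.
have := uniqW (@subalg_val _ _ _ algS \o f) idfun.
rewrite /= fa fb => /(_ erefl erefl x) <-.
exact/asboolP/(valP (f x)).
Qed.
End Presentation.

Lemma lincomb4_eq0 (R : comNzRingType) (x e1 e2 e3 e4 k1 k2 k3 k4 : R) :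
  e1 = 0 -> e2 = 0 -> e3 = 0 -> e4 = 0 ->
  x = k1 * e1 + k2 * e2 + k3 * e3 + k4 * e4 -> x = 0.
Proof. by move=> -> -> -> -> ->; rewrite !mulr0 !addr0. Qed.

(* The 2x2 matrix with rows (x11, x12) and (x21, x22). *)
Definition mat2 (R : Type) := (R * R * R * R)%type.

Section Mat2Ring.
Variable R : comNzRingType.
Local Notation M := (mat2 R).
HB.instance Definition _ := GRing.Zmodule.on M.

Definition mul2 (X Y : M) : M :=
  let: (x11, x12, x21, x22) := X in let: (y11, y12, y21, y22) := Y in
  (x11 * y11 + x12 * y21, x11 * y12 + x12 * y22,
   x21 * y11 + x22 * y21, x21 * y12 + x22 * y22).
Definition scalar2 (r : R) : M := (r, 0, 0, r).

Lemma add2E (x11 x12 x21 x22 y11 y12 y21 y22 : R) :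
  ((x11, x12, x21, x22) : M) + ((y11, y12, y21, y22) : M) =
  (x11 + y11, x12 + y12, x21 + y21, x22 + y22).
Proof. by []. Qed.

Lemma opp2E (x11 x12 x21 x22 : R) :
  - ((x11, x12, x21, x22) : M) = (- x11, - x12, - x21, - x22).
Proof. by []. Qed.

Lemma zero2E : (0 : M) = (0, 0, 0, 0). Proof. by []. Qed.

Lemma mul2A : associative mul2.
Proof.
by move=> [[[? ?] ?] ?] [[[? ?] ?] ?] [[[? ?] ?] ?]; congr (_, _, _, _); ring.
Qed.

Lemma mul2_1l : left_id (scalar2 1) mul2.
Proof. by move=> [[[? ?] ?] ?]; rewrite /scalar2 /=; congr (_, _, _, _); ring. Qed.

Lemma mul2_1r : right_id (scalar2 1) mul2.
Proof. by move=> [[[? ?] ?] ?]; rewrite /scalar2 /=; congr (_, _, _, _); ring. Qed.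

Lemma mul2Dl : left_distributive mul2 +%R.
Proof.
move=> [[[? ?] ?] ?] [[[? ?] ?] ?] [[[? ?] ?] ?].
by rewrite /= add2E; congr (_, _, _, _); ring.
Qed.

Lemma mul2Dr : right_distributive mul2 +%R.
Proof.
move=> [[[? ?] ?] ?] [[[? ?] ?] ?] [[[? ?] ?] ?].
by rewrite /= add2E; congr (_, _, _, _); ring.
Qed.

Lemma scalar2_1_neq0 : scalar2 1 != 0.
Proof. by apply/eqP => -[/eqP]; rewrite oner_eq0. Qed.

HB.instance Definition _ := GRing.Zmodule_isNzRing.Build M
  mul2A mul2_1l mul2_1r mul2Dl mul2Dr scalar2_1_neq0.

Lemma mul2E (x11 x12 x21 x22 y11 y12 y21 y22 : R) :
  ((x11, x12, x21, x22) : M) * ((y11, y12, y21, y22) : M) =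
  (x11 * y11 + x12 * y21, x11 * y12 + x12 * y22,
   x21 * y11 + x22 * y21, x21 * y12 + x22 * y22).
Proof. by []. Qed.

Definition adj2 (X : M) : M :=
  let: (x11, x12, x21, x22) := X in (x22, - x12, - x21, x11).

Lemma adj2D (X Y : M) : adj2 (X + Y) = adj2 X + adj2 Y.
Proof. by case: X Y => [[[? ?] ?] ?] [[[? ?] ?] ?]; rewrite /= !opprD. Qed.

Lemma adj2M (X Y : M) : adj2 (X * Y) = adj2 Y * adj2 X.
Proof.
case: X Y => [[[? ?] ?] ?] [[[? ?] ?] ?].
by rewrite /= mul2E; congr (_, _, _, _); ring.
Qed.

Lemma adj2_1 : adj2 1 = 1.
Proof. by rewrite /= oppr0. Qed.
End Mat2Ring.

(* By Cayley-Hamilton, (tr U + c1) U is a scalar matrix. *)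
Lemma mat2_quadratic_root (R : idomainType) (U : mat2 R) (c1 c0 : R) :
  U * U + scalar2 c1 * U + scalar2 c0 = 0 ->
  adj2 U = scalar2 (- c1) - U \/ forall V, U * V = V * U.
Proof.
case: U => [[[u11 u12] u21] u22].
rewrite /scalar2 !mul2E !add2E => -[E11 E12 E21 E22].
have [tr_eq|tr_neq] := eqVneq (u11 + u22 + c1) 0.
  have -> : u22 = - c1 - u11.
    by apply/eqP; rewrite -subr_eq0 -tr_eq; apply/eqP; ring.
  by left; rewrite /=; congr (_, _, _, _); ring.
right; pose s := u11 + u22 + c1.
have cancel_s u : s * u = 0 -> u = 0.
  by move/eqP; rewrite mulf_eq0 (negPf tr_neq) => /eqP.
have u12_0 : u12 = 0.
  apply/cancel_s/(lincomb4_eq0 (k1 := 0) (k2 := 1) (k3 := 0) (k4 := 0)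
    E11 E12 E21 E22).
  by rewrite /s; ring.
have u21_0 : u21 = 0.
  apply/cancel_s/(lincomb4_eq0 (k1 := 0) (k2 := 0) (k3 := 1) (k4 := 0)
    E11 E12 E21 E22).
  by rewrite /s; ring.
have u11_u22 : u11 = u22.
  apply/eqP; rewrite -subr_eq0; apply/eqP/cancel_s.
  apply: (lincomb4_eq0 (k1 := 1) (k2 := 0) (k3 := 0) (k4 := -1) E11 E12 E21 E22).
  by rewrite /s; ring.
case=> [[[v11 v12] v21] v22]; rewrite !mul2E u12_0 u21_0 u11_u22.
by congr (_, _, _, _); ring.
Qed.

Section Mat2Alg.
Variables (F : fieldType) (R : comAlgType F).
Local Notation M := (mat2 R).

Definition scale2 (c : F) (X : M) : M :=
  let: (x11, x12, x21, x22) := X in (c *: x11, c *: x12, c *: x21, c *: x22).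

Lemma scale2A c d X : scale2 c (scale2 d X) = scale2 (c * d) X.
Proof. by case: X => [[[? ?] ?] ?]; rewrite /= !scalerA. Qed.

Lemma scale2_1 : left_id 1 scale2.
Proof. by case=> [[[? ?] ?] ?]; rewrite /= !scale1r. Qed.

Lemma scale2Dr : right_distributive scale2 +%R.
Proof. by move=> c [[[? ?] ?] ?] [[[? ?] ?] ?]; rewrite /= !scalerDr. Qed.

Lemma scale2Dl X : {morph scale2^~ X : c d / c + d}.
Proof. by case: X => [[[? ?] ?] ?] c d; rewrite /= !scalerDl. Qed.

HB.instance Definition _ := GRing.Zmodule_isLmodule.Build F M
  scale2A scale2_1 scale2Dr scale2Dl.

Lemma scale2E c (x11 x12 x21 x22 : R) :
  c *: ((x11, x12, x21, x22) : M) = (c *: x11, c *: x12, c *: x21, c *: x22).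
Proof. by []. Qed.

Lemma scale2Al c (X Y : M) : c *: (X * Y) = (c *: X) * Y.
Proof.
case: X Y => [[[? ?] ?] ?] [[[? ?] ?] ?].
by rewrite !mul2E !scale2E !scalerDr !scalerAl.
Qed.
HB.instance Definition _ := GRing.Lmodule_isLalgebra.Build F M scale2Al.

Lemma scale2Ar c (X Y : M) : c *: (X * Y) = X * (c *: Y).
Proof.
case: X Y => [[[? ?] ?] ?] [[[? ?] ?] ?].
by rewrite !mul2E !scale2E !scalerDr !scalerAr.
Qed.
HB.instance Definition _ := GRing.Lalgebra_isAlgebra.Build F M scale2Ar.

Lemma scale2_scalar2 c (X : M) : c *: X = scalar2 c%:A * X.
Proof.
by case: X => [[[? ?] ?] ?]; rewrite scale2E mul2E !mul0r !addr0 !add0r !mulr_algl.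
Qed.

Lemma alg2E c : (c%:A : M) = scalar2 c%:A.
Proof. by rewrite scale2_scalar2 mulr1. Qed.

Lemma adj2Z c (X : M) : adj2 (c *: X) = c *: adj2 X.
Proof. by case: X => [[[? ?] ?] ?]; rewrite /= scale2E !scalerN. Qed.
End Mat2Alg.

Lemma size_Xsqr_addMXC (R : comNzRingType) (u v : R) :
  size ('X^2 + u%:P * 'X + v%:P) = 3%N.
Proof.
have -> : 'X^2 + u%:P * 'X + v%:P = ('X + u%:P) * 'X + v%:P by ring.
by rewrite size_MXaddC size_XaddC -size_poly_eq0 size_XaddC.
Qed.

Section Representation.
Variables (F : fieldType) (p q : {poly F}).

Definition repr_a : mat2 {poly F} := (0, - (p`_0)%:P, 1, - (p`_1)%:P).
Definition repr_b : mat2 {poly F} :=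
  ('X, - ('X^2 + (q`_1)%:P * 'X + (q`_0)%:P), 1, - (q`_1)%:P - 'X).
Definition repr_z : {poly F} :=
  - ('X^2 + (q`_1 - p`_1)%:P * 'X + (q`_0 + p`_0)%:P).

Lemma repr_a_root : p \is monic -> size p = 3%N -> horner_alg repr_a p = 0.
Proof.
move=> mp sp; rewrite horner_alg_monic_quadratic // scale2_scalar2 alg2E !alg_polyC.
by rewrite /repr_a /scalar2 !mul2E !add2E /= zero2E; congr (_, _, _, _); ring.
Qed.

Lemma repr_b_root : q \is monic -> size q = 3%N -> horner_alg repr_b q = 0.
Proof.
move=> mq sq; rewrite horner_alg_monic_quadratic // scale2_scalar2 alg2E !alg_polyC.
by rewrite /repr_b /scalar2 !mul2E !add2E /= zero2E; congr (_, _, _, _); ring.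
Qed.

Lemma repr_zE :
  repr_a * repr_b + repr_b * repr_a + q`_1 *: repr_a + p`_1 *: repr_b =
  scalar2 repr_z.
Proof.
rewrite !scale2_scalar2 !alg_polyC /repr_a /repr_b /repr_z /scalar2.
by rewrite !mul2E !add2E /= polyCB polyCD; congr (_, _, _, _); ring.
Qed.

Lemma adj2_repr_a : adj2 repr_a = (trp p)%:A - repr_a.
Proof.
rewrite alg2E alg_polyC /trp /repr_a /scalar2 opp2E add2E /=.
by congr (_, _, _, _); ring.
Qed.

Lemma adj2_repr_b : adj2 repr_b = (trp q)%:A - repr_b.
Proof.
rewrite alg2E alg_polyC /trp /repr_b /scalar2 opp2E add2E /=.
by congr (_, _, _, _); ring.
Qed.

Lemma repr_ab_neq_ba : repr_a * repr_b != repr_b * repr_a.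
Proof.
apply/eqP; rewrite /repr_a /repr_b !mul2E => -[+ _ _ _].
rewrite mul0r add0r !mulr1 mulr0 add0r => /(congr1 (fun r : {poly F} => size r)).
rewrite !size_polyN size_Xsqr_addMXC => sz.
by have := size_polyC_leq1 (p`_0); rewrite sz.
Qed.

(* After eliminating u0 and u1, the system in u2, u3 has determinant D, a
   polynomial of degree 4. *)
Lemma repr_free (u0 u1 u2 u3 : {poly F}) :
  scalar2 u0 + scalar2 u1 * repr_a + scalar2 u2 * repr_b +
    scalar2 u3 * (repr_a * repr_b) = 0 ->
  [/\ u0 = 0, u1 = 0, u2 = 0 & u3 = 0].
Proof.
rewrite /scalar2 /repr_a /repr_b !mul2E !add2E /= zero2E => -[E11 E12 E21 E22].
pose Y := - ('X^2 + (q`_1)%:P * 'X + (q`_0 - p`_0)%:P).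
pose L := (2%:R)%:P * 'X + (q`_1 - p`_1)%:P.
pose D := Y * (Y + (p`_1)%:P * L) + (p`_0)%:P * (L * L).
have D_neq0 : D != 0.
  have sY : size Y = 3%N by rewrite size_polyN size_Xsqr_addMXC.
  have sL : (size L <= 2)%N.
    by rewrite size_MXaddC; case: ifP => // _; rewrite ltnS size_polyC_leq1.
  have sYL : size (Y + (p`_1)%:P * L) = 3%N.
    by rewrite size_polyDl sY // mul_polyC (leq_ltn_trans (size_scale_leq _ _)).
  have sYYL : size (Y * (Y + (p`_1)%:P * L)) = 5%N.
    by rewrite size_mul -?size_poly_eq0 ?sY ?sYL.
  rewrite -size_poly_eq0 size_polyDl sYYL // mul_polyC.
  apply: (leq_ltn_trans (size_scale_leq _ _)).
  apply: (leq_ltn_trans (size_mul_leq _ _)).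
  by case: (size L) sL => [|[|[|]]].
have cancelD u : D * u = 0 -> u = 0.
  by move/eqP; rewrite mulf_eq0 (negPf D_neq0) => /eqP.
have u3_0 : u3 = 0.
  apply/cancelD/(lincomb4_eq0 (k1 := - Y) (k2 := L)
    (k3 := (p`_1)%:P * Y + (p`_0)%:P * L) (k4 := Y) E11 E12 E21 E22).
  by rewrite /D /Y /L !polyCB; ring.
have u2_0 : u2 = 0.
  apply/cancelD/(lincomb4_eq0 (k1 := (p`_0)%:P * L) (k2 := Y + (p`_1)%:P * L)
    (k3 := (p`_0)%:P * Y) (k4 := - ((p`_0)%:P * L)) E11 E12 E21 E22).
  by rewrite /D /Y /L !polyCB; ring.
rewrite u2_0 u3_0 in E11 E21 *.
by split=> //; [rewrite -[RHS]E11 | rewrite -[RHS]E21]; ring.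
Qed.
End Representation.

Section Span.
Variables (F : fieldType) (p q : {poly F}) (W : algType F) (a b : W).
Hypotheses (mp : p \is monic) (sp : size p = 3%N).
Hypotheses (mq : q \is monic) (sq : size q = 3%N).
Hypothesis pres : is_W_presentation p q a b.

Let a_sqr : a * a = - (p`_1 *: a) - (p`_0)%:A.
Proof. exact: monic_quadratic_root_sqr mp sp pres.1. Qed.

Let b_sqr : b * b = - (q`_1 *: b) - (q`_0)%:A.
Proof. exact: monic_quadratic_root_sqr mq sq pres.2.1. Qed.

Definition zW : W := a * b + b * a + q`_1 *: a + p`_1 *: b.

Lemma commr_a_zW : GRing.comm a zW.
Proof.
rewrite /zW addrAC; apply: commrD; first exact: commr_quadratic a_sqr.
by rewrite -mulr_algl; apply: commrM; [apply/commr_sym/comm_alg | apply: commr_refl].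
Qed.

Lemma commr_b_zW : GRing.comm b zW.
Proof.
rewrite /zW [a * b + _]addrC; apply: commrD; first exact: commr_quadratic b_sqr.
by rewrite -mulr_algl; apply: commrM; [apply/commr_sym/comm_alg | apply: commr_refl].
Qed.

Local Notation hz := (horner_alg zW).

Definition zspan (x : W) : Prop := exists e0 e1 e2 e3 : {poly F},
  x = hz e0 + hz e1 * a + hz e2 * b + hz e3 * (a * b).

Lemma zspanD x y : zspan x -> zspan y -> zspan (x + y).
Proof.
move=> [e0 [e1 [e2 [e3 ->]]]] [f0 [f1 [f2 [f3 ->]]]].
exists (e0 + f0), (e1 + f1), (e2 + f2), (e3 + f3); rewrite !rmorphD !mulrDl.
by rewrite addrACA; congr (_ + _); rewrite addrACA; congr (_ + _); rewrite addrACA.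
Qed.

Lemma zspanMl e x : zspan x -> zspan (hz e * x).
Proof.
move=> [e0 [e1 [e2 [e3 ->]]]]; exists (e * e0), (e * e1), (e * e2), (e * e3).
by rewrite !rmorphM !mulrDr !mulrA.
Qed.

Lemma zspanZ c x : zspan x -> zspan (c *: x).
Proof. by rewrite -mulr_algl -(horner_algC zW); apply: zspanMl. Qed.

Lemma zspanN x : zspan x -> zspan (- x).
Proof. by rewrite -scaleN1r; apply: zspanZ. Qed.

Lemma zspan_zWM x : zspan x -> zspan (zW * x).
Proof. by rewrite -{1}(horner_algX zW); apply: zspanMl. Qed.

Lemma zspan1 : zspan 1.
Proof. by exists 1, 0, 0, 0; rewrite rmorph1 !rmorph0 !mul0r !addr0. Qed.

Lemma zspan_zW : zspan zW.
Proof. by rewrite -(mulr1 zW); apply/zspan_zWM/zspan1. Qed.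

Lemma zspan_a : zspan a.
Proof. by exists 0, 1, 0, 0; rewrite rmorph1 !rmorph0 !mul0r mul1r add0r !addr0. Qed.

Lemma zspan_b : zspan b.
Proof. by exists 0, 0, 1, 0; rewrite rmorph1 !rmorph0 !mul0r mul1r !add0r !addr0. Qed.

Lemma zspan_ab : zspan (a * b).
Proof. by exists 0, 0, 0, 1; rewrite rmorph1 !rmorph0 !mul0r mul1r !add0r. Qed.

(* zW must be tried before zspanD, which would unfold it. *)
Local Ltac zspan_tac := repeat first
  [ exact: zspan1 | exact: zspan_a | exact: zspan_b | exact: zspan_ab
  | exact: zspan_zW | apply: zspan_zWM
  | apply: zspanD | apply: zspanN | apply: zspanZ | apply: zspanMl ].

Lemma zspan_mula x : zspan x -> zspan (a * x).
Proof.
move=> [e0 [e1 [e2 [e3 ->]]]].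
rewrite !mulrDr !mulrA !(commr_horner_alg _ commr_a_zW) -!mulrA.
rewrite [a * (a * b)]mulrA !a_sqr.
by rewrite mulrBl mulNr -scalerAl mulr_algl; zspan_tac.
Qed.

Lemma ba_zW : b * a = zW - (a * b + q`_1 *: a + p`_1 *: b).
Proof. by apply/eqP; rewrite eq_sym subr_eq /zW [a * b + _]addrC !addrA. Qed.

Lemma zspan_ba : zspan (b * a).
Proof. by rewrite ba_zW; zspan_tac. Qed.

Lemma zspan_bab : zspan (b * a * b).
Proof.
rewrite ba_zW mulrBl; apply: zspanD; first exact/zspan_zWM/zspan_b.
rewrite !mulrDl -!scalerAl -mulrA !b_sqr mulrBr mulrN -scalerAr mulr_algr.
by zspan_tac.
Qed.

Lemma zspan_mulb x : zspan x -> zspan (b * x).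
Proof.
move=> [e0 [e1 [e2 [e3 ->]]]].
rewrite !mulrDr !mulrA !(commr_horner_alg _ commr_b_zW) -!mulrA.
rewrite [b * (a * b)]mulrA b_sqr.
by zspan_tac; solve [exact: zspan_ba | exact: zspan_bab].
Qed.

Lemma zspanW x : zspan x.
Proof.
suff zspanM z : forall y, zspan y -> zspan (z * y).
  by rewrite -[x]mulr1; apply/zspanM/zspan1.
apply: (W_ind (P := fun x => forall y, zspan y -> zspan (x * y)) pres).
- by move=> y; rewrite mul1r.
- by move=> x1 x2 S1 S2 y Sy; rewrite mulrDl; apply: zspanD; [apply: S1 | apply: S2].
- by move=> c x1 S1 y Sy; rewrite -scalerAl; apply/zspanZ/S1.
- by move=> x1 x2 S1 S2 y Sy; rewrite -mulrA; apply/S1/S2.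
- exact: zspan_mula.
- exact: zspan_mulb.
Qed.
End Span.

Section Adjunction.
Variables (F : fieldType) (p q : {poly F}) (W : algType F) (a b : W).
Hypotheses (mp : p \is monic) (sp : size p = 3%N).
Hypotheses (mq : q \is monic) (sq : size q = 3%N).
Hypothesis pres : is_W_presentation p q a b.
Variable pi : {lrmorphism W -> mat2 {poly F}}.
Hypotheses (pi_a : pi a = repr_a p) (pi_b : pi b = repr_b q).

Lemma pi_zW : pi (zW p q a b) = scalar2 (repr_z p q).
Proof. by rewrite /zW !linearD !linearZ_LR !rmorphM /= pi_a pi_b repr_zE. Qed.

Lemma pi_horner_zW e : pi (horner_alg (zW p q a b) e) = scalar2 (e \Po repr_z p q).
Proof.
rewrite lrmorph_horner_alg pi_zW.
elim/poly_ind: e => [|e c IHe]; first by rewrite rmorph0 comp_poly0.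
rewrite rmorphD rmorphM /= IHe horner_algX horner_algC alg2E alg_polyC.
rewrite comp_polyD comp_polyM comp_polyX comp_polyC /scalar2 mul2E add2E.
by congr (_, _, _, _); ring.
Qed.

Lemma pi_eq0 x : pi x = 0 -> x = 0.
Proof.
have [e0 [e1 [e2 [e3 ->]]]] := zspanW mp sp mq sq pres x.
rewrite !linearD !rmorphM /= !pi_horner_zW pi_a pi_b => /repr_free[].
have comp_z_eq0 e : e \Po repr_z p q = 0 -> e = 0.
  by move/eqP; rewrite comp_poly_eq0 ?size_polyN ?size_Xsqr_addMXC // => /eqP.
move=> /comp_z_eq0-> /comp_z_eq0-> /comp_z_eq0-> /comp_z_eq0->.
by rewrite !rmorph0 !mul0r !addr0.
Qed.

Lemma pi_inj : injective pi.
Proof. by apply: raddf_inj; exact: pi_eq0. Qed.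

Lemma ab_neq_ba : a * b != b * a.
Proof.
apply/eqP => /(congr1 pi); rewrite !rmorphM /= pi_a pi_b.
exact/eqP/repr_ab_neq_ba.
Qed.

Variable star : W -> W.
Hypothesis adj : is_adjunction p q a b star.

Lemma starD x y : star (x + y) = star x + star y.
Proof. by have [starL _] := adj; have := starL 1 x y; rewrite !scale1r. Qed.

Lemma starZ c x : star (c *: x) = c *: star x.
Proof.
have [starL _] := adj.
by apply: (addIr (star 0)); rewrite -starL -starD !addr0.
Qed.

Lemma pi_star x : pi (star x) = adj2 (pi x).
Proof.
have [_ [star1 [starM [_ [star_a star_b]]]]] := adj.
elim/(W_ind pres): x => [|x y IHx IHy|c x IHx|x y IHx IHy||].
- by rewrite star1 rmorph1 adj2_1.
- by rewrite starD !linearD /= IHx IHy -adj2D.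
- by rewrite starZ !linearZ_LR /= IHx -adj2Z.
- by rewrite starM !rmorphM /= IHx IHy -adj2M.
- by rewrite star_a linearB /= rmorph_alg pi_a adj2_repr_a.
- by rewrite star_b linearB /= rmorph_alg pi_b adj2_repr_b.
Qed.

Variable Phi : {lrmorphism W -> W}.
Hypothesis Phi_inj : injective Phi.

Lemma star_Phi_root x y (r : {poly F}) :
  r \is monic -> size r = 3%N -> horner_alg x r = 0 -> x * y != y * x ->
  star (Phi x) = (- r`_1)%:A - Phi x.
Proof.
move=> mr sr rx xy_neq_yx; set U := pi (Phi x).
have : horner_alg U r = 0 by rewrite -!lrmorph_horner_alg rx !rmorph0.
rewrite horner_alg_monic_quadratic // scale2_scalar2 alg2E => U_root.
have [adjU|U_central] := mat2_quadratic_root U_root.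
  by apply: pi_inj; rewrite pi_star adjU linearB /= rmorph_alg alg2E scaleNr.
exfalso; move/eqP: xy_neq_yx; apply; apply/Phi_inj/pi_inj.
by rewrite !rmorphM /=; exact: U_central.
Qed.

Lemma Phi_star x : Phi (star x) = star (Phi x).
Proof.
have [_ [star1 [starM [_ [star_a star_b]]]]] := adj.
elim/(W_ind pres): x => [|x y IHx IHy|c x IHx|x y IHx IHy||].
- by rewrite star1 !rmorph1 star1.
- by rewrite !starD !linearD /= starD IHx IHy.
- by rewrite starZ !linearZ_LR /= starZ IHx.
- by rewrite starM !rmorphM /= starM IHx IHy.
- by rewrite star_a linearB /= rmorph_alg (star_Phi_root mp sp pres.1 ab_neq_ba).
- have ba_neq_ab : b * a != a * b by rewrite eq_sym ab_neq_ba.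
  by rewrite star_b linearB /= rmorph_alg (star_Phi_root mq sq pres.2.1 ba_neq_ab).
Qed.
End Adjunction.

Theorem mainTheorem18 (F : fieldType) (p q : {poly F})
    (W : algType F) (a b : W) (star : W -> W)
    (Phi : {lrmorphism W -> W}) :
  p \is monic -> size p = 3%N ->
  q \is monic -> size q = 3%N ->
  is_W_presentation p q a b ->
  is_adjunction p q a b star ->
  injective Phi ->
  forall x : W, Phi (star x) = star (Phi x).
Proof.
move=> mp sp mq sq pres adj Phi_inj.
have [[pi [pi_a pi_b]] _] := pres.2.2 _ _ _ (repr_a_root mp sp) (repr_b_root mq sq).
exact: (Phi_star mp sp mq sq pres pi_a pi_b adj Phi_inj).
Qed.
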